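(* Let $K\subset\mathbb{R}^n$ be a closed convex set and $\sigma>0$. For any fixed constants $C_1,C_2>0$ define $\varepsilon^\dagger=\sup\{\varepsilon>0:\varepsilon^2/\sigma^2\le C_1\log M^{\mathrm{loc}}(C_2\varepsilon)\}$. Then $\varepsilon^*\asymp\varepsilon^\dagger$, where $\varepsilon^*=\sup\{\varepsilon:\varepsilon^2/\sigma^2\le\log M^{\mathrm{loc}}(\varepsilon)\}$.
   Context: $M(\eta,T)$ is the maximal cardinality of a subset of $T$ with pairwise Euclidean distances $>\eta$; $M^{\mathrm{loc}}(\varepsilon)=\sup_{\theta\in K}M(\varepsilon/c^*,B(\theta,\varepsilon)\cap K)$, where $B$ is the closed Euclidean ball and $c^*$ a fixed sufficiently large absolute constant. $\asymp$ hides constants depending only on $C_1,C_2$. *)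

From HB Require Import structures.
From mathcomp Require Import all_boot all_order all_algebra.
From mathcomp Require Import all_classical all_reals all_analysis.
Set Implicit Arguments. Unset Strict Implicit. Unset Printing Implicit Defensive.
Import Order.TTheory GRing.Theory Num.Theory.
Local Open Scope classical_set_scope.
Local Open Scope ring_scope.

Definition edist {R : realType} {n : nat} (x y : 'M[R]_(1, n)) : R :=
  Num.sqrt (\sum_(i < n) (x ord0 i - y ord0 i) ^+ 2).

Definition eball {R : realType} {n : nat} (theta : 'M[R]_(1, n)) (r : R) : set 'M[R]_(1, n) :=
  [set x | edist theta x <= r].

Definition convex_set {R : realType} {n : nat} (K : set 'M[R]_(1, n)) : Prop :=
  forall x y, K x -> K y -> forall t : R, 0 <= t -> t <= 1 ->
    K (t *: x + (1 - t) *: y).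

Definition packing_set {R : realType} {n : nat} (eta : R) (T : set 'M[R]_(1, n))
  (s : seq 'M[R]_(1, n)) : Prop :=
  uniq s /\ (forall x, x \in s -> T x) /\ pairwise (fun x y => eta < edist x y) s.

Definition packingM {R : realType} {n : nat} (eta : R) (T : set 'M[R]_(1, n)) : R :=
  sup [set (size s)%:R | s in packing_set eta T].

Definition Mloc {R : realType} {n : nat} (cstar : R) (K : set 'M[R]_(1, n)) (eps : R) : R :=
  sup [set packingM (eps / cstar) (eball theta eps `&` K) | theta in K].

Definition eps_star {R : realType} {n : nat} (cstar : R) (K : set 'M[R]_(1, n)) (sigma : R) : R :=
  sup [set e : R | 0 < e /\ e ^+ 2 / sigma ^+ 2 <= ln (Mloc cstar K e)].

Definition eps_dagger {R : realType} {n : nat} (cstar : R) (K : set 'M[R]_(1, n))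
  (sigma C1 C2 : R) : R :=
  sup [set e : R | 0 < e /\ e ^+ 2 / sigma ^+ 2 <= C1 * ln (Mloc cstar K (C2 * e))].

(* K is closed in R^n (product topology on matrices over R, which coincides
   with the Euclidean topology); R^o carries the canonical topology of R. *)
Definition closed_set {R : realType} {n : nat} (K : set 'M[R]_(1, n)) : Prop :=
  closed (K : set 'M[R^o]_(1, n)).

From Pilot Require Import Defs.
From HB Require Import structures.
From mathcomp Require Import all_boot all_order all_algebra.
From mathcomp Require Import all_classical all_reals all_analysis.
From mathcomp Require Import ring lra.
Import Order.TTheory GRing.Theory Num.Theory.
Local Open Scope classical_set_scope.
Local Open Scope ring_scope.
Set Implicit Arguments. Unset Strict Implicit.

(* Shrinking a packing of B(theta, e') /\ K towards theta by the factor e / e'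
   keeps it inside K by convexity and turns it into a packing of
   B(theta, e) /\ K at separation e / c*, so M^loc is nonincreasing; a grid
   count bounds it by a constant depending only on n and c*, so all suprema
   involved are finite.  As log M^loc is nonincreasing, if e belongs to the set
   defining eps* then t e belongs to the set defining eps^dagger as soon as
   t^2 <= C1 and C2 t <= 1, and symmetrically; comparing suprema gives
   eps* ~ eps^dagger. *)

Section SupScale.
Variable R : realType.

Lemma sup_ge0 (S : set R) : (forall x, S x -> 0 <= x) -> 0 <= sup S.
Proof.
move=> S_ge0; have [supS|nsupS] := pselect (has_sup S); last by rewrite sup_out.
have [[x Sx] _] := supS.
exact: le_trans (S_ge0 _ Sx) (sup_upper_bound supS Sx).
Qed.

Lemma ler_sup_scale (S T : set R) (t : R) : 0 < t ->
  (forall x, T x -> 0 <= x) -> has_ubound T ->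
  (forall x, S x -> T (t * x)) -> t * sup S <= sup T.
Proof.
move=> t_gt0 T_ge0 ubT ST.
have [S0|S_empty] := pselect (S !=set0); last first.
  have -> : S = set0 by apply/seteqP; split=> // x Sx; apply: S_empty; exists x.
  by rewrite sup0 mulr0 sup_ge0.
rewrite mulrC -ler_pdivlMr //; apply: ge_sup => // x Sx.
by rewrite ler_pdivlMr // mulrC; exact: ub_le_sup ubT _ (ST _ Sx).
Qed.

End SupScale.

Lemma min1_sqr_le (R : realDomainType) (p q : R) : 0 < p -> 0 < q ->
  [/\ 0 < Num.min 1 (Num.min p q), Num.min 1 (Num.min p q) ^+ 2 <= p
    & Num.min 1 (Num.min p q) <= q].
Proof.
move=> p_gt0 q_gt0; set t := Num.min 1 _.
have t_gt0 : 0 < t by rewrite !lt_min ltr01 p_gt0 q_gt0.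
have t_le1 : t <= 1 by rewrite ge_min lexx.
have t_lep : t <= p by rewrite !ge_min lexx orbT.
split=> //; last by rewrite !ge_min lexx !orbT.
by apply: le_trans t_lep; rewrite expr2 ler_piMr // ltW.
Qed.

Section Threshold.
Variables (R : realType) (f : R -> R) (sigma : R).
Hypothesis sigma_gt0 : 0 < sigma.
Hypothesis f_nonincr : forall x y : R, 0 < x -> x <= y -> f y <= f x.

Definition threshold_set (a b : R) :=
  [set e : R | 0 < e /\ e ^+ 2 / sigma ^+ 2 <= a * f (b * e)].

Lemma threshold_set_ubound (a b : R) : 0 < a -> 0 < b -> has_ubound (threshold_set a b).
Proof.
move=> a_gt0 b_gt0; exists (Num.max 1 (Num.max b^-1 (sigma ^+ 2 * a * `|f 1|))).
move=> e [e_gt0 He]; rewrite !le_max.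
have [be_le1|be_gt1] := leP (b * e) 1.
  by rewrite -ler_pdivlMl // mulr1 in be_le1; rewrite be_le1 orbT.
have [//|e_gt1] := leP e 1.
suff e2_le : e ^+ 2 <= sigma ^+ 2 * a * `|f 1|.
  by rewrite (le_trans _ e2_le) ?orbT // expr2 ler_peMl // ltW.
rewrite -mulrA mulrC -ler_pdivrMr ?exprn_gt0 //; apply: le_trans He _.
by rewrite ler_pM2l //; apply: le_trans (ler_norm _); exact: f_nonincr (ltW be_gt1).
Qed.

Lemma threshold_sup_scale (a b a' b' t : R) :
  0 < a -> 0 < a' -> 0 < b' -> 0 < t -> t ^+ 2 * a <= a' -> b' * t <= b ->
  t * sup (threshold_set a b) <= sup (threshold_set a' b').
Proof.
move=> a_gt0 a'_gt0 b'_gt0 t_gt0 ta_le bt_le.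
apply: ler_sup_scale => //; [by move=> x [/ltW] | exact: threshold_set_ubound |].
move=> e [e_gt0 He]; split; first exact: mulr_gt0.
have f_ge0 : 0 <= f (b * e).
  by rewrite -(pmulr_rge0 _ a_gt0); apply: le_trans He; rewrite divr_ge0 ?sqr_ge0.
rewrite exprMn -mulrA; apply: le_trans (_ : t ^+ 2 * (a * f (b * e)) <= _).
  by rewrite ler_pM2l ?exprn_gt0.
rewrite mulrA; apply: ler_pM => //; first by rewrite mulr_ge0 ?sqr_ge0 ?ltW.
by apply: f_nonincr; rewrite ?mulr_gt0 // mulrA ler_pM2r.
Qed.

Lemma threshold_sup_lower (C1 C2 : R) : 0 < C1 -> 0 < C2 ->
  Num.min 1 (Num.min C1 C2^-1) * sup (threshold_set 1 1)
    <= sup (threshold_set C1 C2).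
Proof.
move=> C1_gt0 C2_gt0.
have C2V_gt0 : 0 < C2^-1 by rewrite invr_gt0.
have [t_gt0 t2_le t_le] := min1_sqr_le C1_gt0 C2V_gt0.
by apply: threshold_sup_scale; rewrite ?mulr1 // mulrC -ler_pdivlMr // div1r.
Qed.

Lemma threshold_sup_upper (C1 C2 : R) : 0 < C1 -> 0 < C2 ->
  sup (threshold_set C1 C2)
    <= (Num.min 1 (Num.min C1^-1 C2))^-1 * sup (threshold_set 1 1).
Proof.
move=> C1_gt0 C2_gt0.
have C1V_gt0 : 0 < C1^-1 by rewrite invr_gt0.
have [t_gt0 t2_le t_le] := min1_sqr_le C1V_gt0 C2_gt0.
rewrite -ler_pdivrMl ?invr_gt0 // invrK.
by apply: threshold_sup_scale; rewrite ?mul1r // -ler_pdivlMr // div1r.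
Qed.

End Threshold.

Lemma pairwise_sym_in (T : eqType) (r : rel T) (s : seq T) : symmetric r ->
  pairwise r s -> {in s &, forall x y, x != y -> r x y}.
Proof.
move=> r_sym; elim: s => // z s IHs /= /andP[/allP rz rs] x y.
rewrite !inE => /orP[/eqP->|xs] /orP[/eqP->|ys]; rewrite ?eqxx //.
- by move=> _; apply: rz.
- by move=> _; rewrite r_sym; apply: rz.
- exact: IHs.
Qed.

Lemma truncn_eq_dist (R : archiRealFieldType) (u v : R) : 0 <= u -> 0 <= v ->
  Num.truncn u = Num.truncn v -> `|u - v| < 1.
Proof.
move=> u_ge0 v_ge0 uv; rewrite ltr_norml.
have /andP[lu hu] := truncn_itv u_ge0; have /andP[lv hv] := truncn_itv v_ge0.
rewrite uv in lu hu; rewrite -!natr1 in hu hv; apply/andP; split; lra.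
Qed.

Section Euclid.
Variables (R : realType) (n : nat).
Implicit Types (x y th : 'rV[R]_n) (t h : R).

(* [edist] alone would denote the extended distance of mathcomp-analysis. *)
Lemma edistC x y : Defs.edist x y = Defs.edist y x.
Proof.
by rewrite /Defs.edist; congr Num.sqrt; apply: eq_bigr => i _; rewrite -sqrrN opprB.
Qed.

Lemma coord_le_edist x y i : `|x ord0 i - y ord0 i| <= Defs.edist x y.
Proof.
rewrite /Defs.edist -sqrtr_sqr ler_sqrt; last by apply: sumr_ge0 => j _; exact: sqr_ge0.
by rewrite (bigD1 i) //= lerDl; apply: sumr_ge0 => j _; exact: sqr_ge0.
Qed.

Lemma edist_le_coord h x y : 0 <= h ->
  (forall i, `|x ord0 i - y ord0 i| <= h) -> Defs.edist x y <= n%:R * h.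
Proof.
move=> h_ge0 xy_le; rewrite /Defs.edist -[n%:R * h]ger0_norm ?mulr_ge0 //.
rewrite -sqrtr_sqr ler_sqrt ?sqr_ge0 //.
apply: le_trans (_ : \sum_(i < n) h ^+ 2 <= _).
  apply: ler_sum => i _; have := xy_le i; rewrite ler_norml => /andP[? ?]; nra.
rewrite sumr_const card_ord -[h ^+ 2 *+ n]mulr_natr exprMn mulrC ler_wpM2r ?sqr_ge0 //.
by rewrite -natrX ler_nat; case: n => // m; rewrite expnS leq_pmulr.
Qed.

Definition homothety th t x := t *: x + (1 - t) *: th.

Lemma homothety_center th t : homothety th t th = th.
Proof. by rewrite /homothety -scalerDl addrC subrK scale1r. Qed.

Lemma edist_homothety th t x y :
  Defs.edist (homothety th t x) (homothety th t y) = `|t| * Defs.edist x y.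
Proof.
rewrite /Defs.edist -sqrtr_sqr -sqrtrM ?sqr_ge0 //; congr Num.sqrt.
rewrite mulr_sumr; apply: eq_bigr => i _; rewrite !mxE -exprMn; congr (_ ^+ 2); ring.
Qed.

Lemma convex_set_homothety (K : set 'rV[R]_n) th x t : convex_set K ->
  K th -> K x -> 0 <= t -> t <= 1 -> K (homothety th t x).
Proof.
move=> K_convex Kth Kx t_ge0 t_le1.
by have := K_convex x th (Itv01 t_ge0 t_le1) (mem_set Kx) (mem_set Kth); rewrite inE.
Qed.

End Euclid.

Section Packing.
Variables (R : realType) (n : nat).
Implicit Types (x y th o : 'rV[R]_n) (s : seq 'rV[R]_n).

Lemma packing_set1 eta (T : set 'rV[R]_n) x : T x -> packing_set eta T [:: x].
Proof. by move=> Tx; split=> //; split=> // y; rewrite inE => /eqP->. Qed.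

Lemma packing_set_homothety (K : set 'rV[R]_n) (c e e' : R) th s :
  convex_set K -> K th -> 0 < e -> e <= e' ->
  packing_set (e' / c) (eball th e' `&` K) s ->
  packing_set (e / c) (eball th e `&` K) (map (homothety th (e / e')) s).
Proof.
move=> K_convex Kth e_gt0 ee' [s_uniq [s_in s_sep]].
have e'_gt0 : 0 < e' := lt_le_trans e_gt0 ee'.
set t := e / e'; have t_gt0 : 0 < t by rewrite divr_gt0.
have t_le1 : t <= 1 by rewrite ler_pdivrMr // mul1r.
have te' : t * e' = e by rewrite /t divfK // gt_eqF.
split; [|split].
- rewrite map_inj_uniq // => x y /(congr1 (fun z => t^-1 *: (z - (1 - t) *: th))).
  by rewrite !addrK !scalerA mulVf ?gt_eqF // !scale1r.
- move=> _ /mapP[x xs ->]; have [x_ball Kx] := s_in x xs; split.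
    by rewrite /eball /= -{1}(homothety_center th t) edist_homothety gtr0_norm
      // -te' ler_pM2l.
  by apply: convex_set_homothety; rewrite // ltW.
- rewrite pairwise_map; apply: sub_pairwise s_sep => x y /=.
  by rewrite edist_homothety gtr0_norm // -te' -mulrA ltr_pM2l.
Qed.

Definition grid_cell o (h w : R) x : {ffun 'I_n -> 'I_(Num.truncn w).+1} :=
  [ffun i => inord (Num.truncn ((x ord0 i - o ord0 i) / h))].

Definition in_grid o (h w : R) x := forall i, 0 <= (x ord0 i - o ord0 i) / h <= w.

Lemma grid_cell_coord o (h w : R) x y : 0 < h ->
  in_grid o h w x -> in_grid o h w y -> grid_cell o h w x = grid_cell o h w y ->
  forall i, `|x ord0 i - y ord0 i| <= h.
Proof.
move=> h_gt0 x_grid y_grid same_cell i.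
have /andP[ux_ge0 ux_le] := x_grid i; have /andP[uy_ge0 uy_le] := y_grid i.
have := congr1 (fun f : {ffun 'I_n -> _} => val (f i)) same_cell.
rewrite !ffunE /= !inordK ?ltnS ?le_truncn // => /truncn_eq_dist.
have -> : x ord0 i - y ord0 i =
    h * ((x ord0 i - o ord0 i) / h - (y ord0 i - o ord0 i) / h).
  by field; rewrite gt_eqF.
rewrite normrM gtr0_norm // => /(_ ux_ge0 uy_ge0) /ltW.
by apply: ler_piMr; exact: ltW.
Qed.

Lemma size_grid_packing o (h w : R) s : 0 < h ->
  {in s, forall x, in_grid o h w x} -> uniq s ->
  pairwise (fun x y => n%:R * h < Defs.edist x y) s ->
  (size s <= (Num.truncn w).+1 ^ n)%N.
Proof.
move=> h_gt0 s_grid s_uniq s_sep.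
have cell_inj : {in s &, injective (grid_cell o h w)}.
  move=> x y xs ys same_cell; apply/eqP; apply: contraT => neq_xy.
  have sym : symmetric (fun x y => n%:R * h < Defs.edist x y).
    by move=> ? ?; rewrite edistC.
  have := pairwise_sym_in sym s_sep xs ys neq_xy.
  rewrite ltNge edist_le_coord ?ltW //.
  exact: grid_cell_coord (s_grid _ xs) (s_grid _ ys) same_cell.
have := max_card (mem (map (grid_cell o h w) s)).
by rewrite card_ffun !card_ord (card_uniqP _) ?size_map ?map_inj_in_uniq.
Qed.

Definition packing_bound (c : R) : nat := ((Num.truncn (2 * c * n.+1%:R)).+1 ^ n)%N.

Lemma size_packing_ball (T : set 'rV[R]_n) (c e : R) th s : 0 < c -> 0 < e ->
  packing_set (e / c) (eball th e `&` T) s -> (size s <= packing_bound c)%N.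
Proof.
move=> c_gt0 e_gt0 [s_uniq [s_in s_sep]].
have a_gt0 : 0 < e / c by rewrite divr_gt0.
set h := e / c / n.+1%:R; have h_gt0 : 0 < h by rewrite divr_gt0.
apply: (@size_grid_packing (th - const_mx e) h) => //.
- move=> x /s_in[x_ball _] i; have := le_trans (coord_le_edist th x i) x_ball.
  rewrite !mxE ler_norml => /andP[lo hi]; apply/andP; split.
    by rewrite divr_ge0 ?(ltW h_gt0) //; lra.
  rewrite ler_pdivrMr //.
  have -> : 2 * c * n.+1%:R * h = 2 * e.
    by rewrite /h; field; rewrite addrC natr1 pnatr_eq0 (gt_eqF c_gt0).
  lra.
- apply: sub_pairwise s_sep => x y; apply: le_lt_trans.
  rewrite /h mulrCA; apply: ler_piMr; first exact: ltW.
  by rewrite ler_pdivrMr // mul1r ler_nat.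
Qed.

End Packing.

Section LocalPacking.
Variables (R : realType) (n : nat) (c : R) (K : set 'rV[R]_n).
Hypothesis c_gt0 : 0 < c.

Let packing_sizes e th :=
  [set ((size s)%:R : R) | s in packing_set (e / c) (eball th e `&` K)].

Lemma packing_sizes_ubound e th : 0 < e ->
  ubound (packing_sizes e th) (packing_bound n c)%:R.
Proof.
move=> e_gt0 _ [s s_packing <-].
by rewrite ler_nat; exact: size_packing_ball s_packing.
Qed.

Lemma has_sup_packing_sizes e th : 0 < e -> has_sup (packing_sizes e th).
Proof.
move=> e_gt0; split; first by exists 0, [::].
by exists (packing_bound n c)%:R; exact: packing_sizes_ubound.
Qed.

Lemma packingM_le_bound e th : 0 < e ->
  packingM (e / c) (eball th e `&` K) <= (packing_bound n c)%:R.
Proof.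
by move=> e_gt0; apply: ge_sup; [exists 0, [::] | exact: packing_sizes_ubound].
Qed.

Lemma packingM_ge1 e th : 0 < e -> K th -> 1 <= packingM (e / c) (eball th e `&` K).
Proof.
move=> e_gt0 Kth; apply: sup_upper_bound; first exact: has_sup_packing_sizes.
exists [:: th] => //; apply: packing_set1; split=> //.
by rewrite /eball /= -(homothety_center th 0) edist_homothety normr0 mul0r ltW.
Qed.

Lemma packingM_nonincr e e' th : convex_set K -> 0 < e -> e <= e' -> K th ->
  packingM (e' / c) (eball th e' `&` K) <= packingM (e / c) (eball th e `&` K).
Proof.
move=> K_convex e_gt0 ee' Kth; apply: ge_sup; first by exists 0, [::].
move=> _ [s s_packing <-]; apply: sup_upper_bound; first exact: has_sup_packing_sizes.
exists (map (homothety th (e / e')) s); last by rewrite size_map.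
exact: packing_set_homothety.
Qed.

Let local_packings e := [set packingM (e / c) (eball th e `&` K) | th in K].

Lemma has_sup_local_packings e : 0 < e -> K !=set0 -> has_sup (local_packings e).
Proof.
move=> e_gt0 [th Kth]; split; first by exists (packingM (e / c) (eball th e `&` K)), th.
by exists (packing_bound n c)%:R => _ [t _ <-]; exact: packingM_le_bound.
Qed.

Lemma Mloc_ge1 e : 0 < e -> K !=set0 -> 1 <= Mloc c K e.
Proof.
move=> e_gt0 [th Kth]; apply: le_trans (packingM_ge1 e_gt0 Kth) _.
by apply: sup_upper_bound; [apply: has_sup_local_packings; last exists th | exists th].
Qed.

Lemma Mloc_nonincr e e' : convex_set K -> 0 < e -> e <= e' -> K !=set0 ->
  Mloc c K e' <= Mloc c K e.
Proof.
move=> K_convex e_gt0 ee' [th Kth].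
apply: ge_sup; first by exists (packingM (e' / c) (eball th e' `&` K)), th.
move=> _ [t Kt <-]; apply: le_trans (packingM_nonincr K_convex e_gt0 ee' Kt) _.
by apply: sup_upper_bound; [apply: has_sup_local_packings; last exists th | exists t].
Qed.

Lemma ln_Mloc_nonincr e e' : convex_set K -> 0 < e -> e <= e' ->
  ln (Mloc c K e') <= ln (Mloc c K e).
Proof.
move=> K_convex e_gt0 ee'.
have [K_ne0|K_empty] := pselect (K !=set0).
  have Mloc_gt0 x : 0 < x -> 0 < Mloc c K x.
    by move=> x_gt0; apply: lt_le_trans ltr01 (Mloc_ge1 x_gt0 K_ne0).
  have e'_gt0 := lt_le_trans e_gt0 ee'.
  by rewrite ler_ln ?posrE ?Mloc_gt0 //; exact: Mloc_nonincr.
have -> : K = set0 by apply/seteqP; split=> // x Kx; apply: K_empty; exists x.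
by rewrite /Mloc !image_set0.
Qed.

End LocalPacking.

Theorem mainTheorem15 (R : realType) :
  exists c0 : R, forall cstar : R, c0 <= cstar ->
  forall C1 C2 : R, 0 < C1 -> 0 < C2 ->
  exists c C : R, 0 < c /\ 0 < C /\
  forall (n : nat) (K : set 'M[R]_(1, n)) (sigma : R),
    closed_set K -> convex_set K -> 0 < sigma ->
    c * eps_star cstar K sigma <= eps_dagger cstar K sigma C1 C2 /\
    eps_dagger cstar K sigma C1 C2 <= C * eps_star cstar K sigma.
Proof.
exists 1 => cstar cstar_ge1 C1 C2 C1_gt0 C2_gt0.
have cstar_gt0 : 0 < cstar := lt_le_trans ltr01 cstar_ge1.
have C1V_gt0 : 0 < C1^-1 by rewrite invr_gt0.
have C2V_gt0 : 0 < C2^-1 by rewrite invr_gt0.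
have [c_gt0 _ _] := min1_sqr_le C1_gt0 C2V_gt0.
have [C_gt0 _ _] := min1_sqr_le C1V_gt0 C2_gt0.
exists (Num.min 1 (Num.min C1 C2^-1)), (Num.min 1 (Num.min C1^-1 C2))^-1.
split=> //; split; first by rewrite invr_gt0.
move=> n K sigma _ K_convex sigma_gt0.
pose f e := ln (Mloc cstar K e).
have f_nonincr x y : 0 < x -> x <= y -> f y <= f x by exact: ln_Mloc_nonincr.
have -> : eps_star cstar K sigma = sup (threshold_set f sigma 1 1).
  by congr sup; apply: eq_set => e; rewrite !mul1r.
split; [exact: threshold_sup_lower | exact: threshold_sup_upper].
Qed.
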